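(* There is a function $h$ such that for all integers $t,k\ge 1$, every $\mathcal{O}_k$-free graph with no $K_{t,t}$ subgraph has average degree at most $h(t,k)$ and chromatic number at most $h(t,k)+1$.
   Context: All graphs are finite, simple and nonempty. Two vertex-disjoint subgraphs are independent if there is no edge between them. A graph $G$ is $\mathcal{O}_k$-free if it does not contain $k$ pairwise vertex-disjoint and pairwise independent cycles; equivalently, $G$ has no induced subgraph isomorphic to a disjoint union of $k$ cycles. *)

From mathcomp Require Import all_boot all_order all_algebra.
Set Implicit Arguments. Unset Strict Implicit. Unset Printing Implicit Defensive.
Import GRing.Theory Num.Theory.

Definition simple_graph (T : finType) (e : rel T) : Prop :=
  symmetric e /\ irreflexive e.

Definition is_cycle (T : finType) (e : rel T) (s : seq T) : bool :=
  (3 <= size s) && ucycleb e s.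

Definition has_k_indep_cycles (T : finType) (e : rel T) (k : nat) : Prop :=
  exists C : 'I_k -> seq T,
    (forall i, is_cycle e (C i)) /\
    (forall i j, i != j ->
       forall x y, x \in C i -> y \in C j -> (x != y) && ~~ e x y).

Definition Ok_free (T : finType) (e : rel T) (k : nat) : Prop :=
  ~ has_k_indep_cycles e k.

Definition has_Ktt_subgraph (T : finType) (e : rel T) (t : nat) : Prop :=
  exists A B : {set T},
    [/\ #|A| = t, #|B| = t, [disjoint A & B] &
        forall x y, x \in A -> y \in B -> e x y].

Definition degree (T : finType) (e : rel T) (v : T) : nat := #|[set w | e v w]|.

Definition avg_degree (T : finType) (e : rel T) : rat :=
  ((\sum_(v : T) degree e v)%N)%:R / (#|T|)%:R.

Definition colorable (T : finType) (e : rel T) (c : nat) : Prop :=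
  exists f : T -> 'I_c, forall x y, e x y -> f x != f y.

From mathcomp Require Import all_boot all_order all_algebra zify.
From Stdlib Require Import Classical_Prop.
Import GRing.Theory Num.Theory.
Set Implicit Arguments. Unset Strict Implicit. Unset Printing Implicit Defensive.

(* Every nonempty induced subgraph of an O_k-free graph without K_{t,t} has a
   vertex of degree at most d := 8 R + k + 2, for a Ramsey number R; such
   graphs have average degree at most 2 d and are (d + 1)-colourable.
   Suppose an induced subgraph S has minimum degree at least d, and greedily
   pick vertex-disjoint cycles of length at most 8 in S. If this stops before
   R cycles are found, deleting the at most 8 R vertices used leaves an induced
   subgraph of minimum degree k + 2 and girth at least 9. There, by minimality,
   a shortest cycle C is chordless, no outside vertex has two neighbours on C,
   and no vertex outside the closed neighbourhood N[C] has two neighbours in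
   N[C]; so deleting N[C] costs one unit of minimum degree, and induction
   yields k pairwise independent cycles. Otherwise, colour each pair of the R
   short cycles by the positions of an edge between them, or by "no edge":
   Ramsey's theorem gives k + 2 t cycles with the same colour, which are either
   pairwise independent or contain a K_{t,t}. *)

Lemma ex_max_nat (P : nat -> Prop) n0 b : P n0 -> (forall n, P n -> n <= b) ->
  exists2 n, P n & forall m, P m -> m <= n.
Proof.
move=> Pn0 Pb; suff maxP : forall k n, b - n <= k -> P n ->
    exists2 n, P n & forall m, P m -> m <= n by exact: (maxP _ _ (leqnn _) Pn0).
elim=> [|k IHk] n lebn Pn.
  by exists n => // m /Pb; have := Pb _ Pn; lia.
case: (classic (exists2 m, P m & n < m)) => [[m Pm ltnm]|nomax].
  by apply: (IHk m) => //; have := Pb _ Pm; lia.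
exists n => // m Pm; rewrite leqNgt; apply/negP => ltnm.
by apply: nomax; exists m.
Qed.

Lemma ex_min_nat (P : nat -> Prop) n0 : P n0 ->
  exists2 n, P n & forall m, P m -> n <= m.
Proof.
elim: n0 {-2}n0 (leqnn n0) => [|k IHk] n lenk Pn.
  by exists n => // m _; lia.
case: (classic (exists2 m, P m & m < n)) => [[m Pm ltmn]|nomin].
  by apply: (IHk m) => //; lia.
exists n => // m Pm; rewrite leqNgt; apply/negP => ltmn.
by apply: nomin; exists m.
Qed.

(* [wrap g a] is the position [a] on a cycle of length [g], valid only for
   [a < 2 * g]; [cdist g i j] is the forward distance from [i] to [j]. *)
Definition wrap (g a : nat) := if a < g then a else a - g.
Definition cdist (g i j : nat) := if i <= j then j - i else j + g - i.

Lemma wrap_lt g a : a < 2 * g -> wrap g a < g.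
Proof. rewrite /wrap; case: ifP; lia. Qed.

Lemma wrap_id g a : a < g -> wrap g a = a.
Proof. by rewrite /wrap => ->. Qed.

Lemma wrapS g a : a.+1 < 2 * g -> wrap g (wrap g a).+1 = wrap g a.+1.
Proof. rewrite /wrap; case: ifP; case: ifP; try case: ifP; lia. Qed.

Lemma wrap_inj g i d a b : i < g -> d < g ->
  i <= a < i + d.+1 -> i <= b < i + d.+1 -> wrap g a = wrap g b -> a = b.
Proof. rewrite /wrap; case: ifP; case: ifP; lia. Qed.

Lemma wrap_cdist g i j : i < g -> j < g -> wrap g (i + cdist g i j) = j.
Proof. rewrite /wrap /cdist; case: ifP; case: ifP; lia. Qed.

Lemma cdist_lt g i j : i < g -> j < g -> cdist g i j < g.
Proof. rewrite /cdist; case: ifP; lia. Qed.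

Lemma cdist_gt0 g i j : i < g -> j < g -> i != j -> 0 < cdist g i j.
Proof. rewrite /cdist; case: ifP; lia. Qed.

Lemma cdistnn g i : cdist g i i = 0.
Proof. by rewrite /cdist leqnn subnn. Qed.

Lemma cdist0n g m : cdist g 0 m = m.
Proof. by rewrite /cdist leq0n subn0. Qed.

Lemma cdist_add_sym g i j : i < g -> j < g -> i != j ->
  cdist g i j + cdist g j i = g.
Proof. rewrite /cdist; case: ifP; case: ifP; lia. Qed.

Section Ramsey.
Variables (A : eqType) (K : finType).

Lemma size_sum_count (g : A -> K) (s : seq A) :
  size s = \sum_(c : K) count (fun x => g x == c) s.
Proof.
elim: s => [|x s IHs] /=; first by rewrite big1.
rewrite big_split /= -IHs (bigD1 (g x)) //= eqxx big1 ?addn0 ?add1n // => c.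
by rewrite eq_sym => /negbTE ->.
Qed.

Lemma pigeonhole_count (g : A -> K) (s : seq A) m : 0 < #|K| ->
  #|K| * m <= size s -> exists c, m <= count (fun x => g x == c) s.
Proof.
move=> K0 le_s; apply/existsP; apply: contraTT le_s.
rewrite negb_exists -ltnNge => /forallP few.
rewrite (size_sum_count g); apply: leq_ltn_trans (_ : _ <= #|K| * m.-1) _.
  by rewrite -sum_nat_const; apply: leq_sum => c _; have := few c; rewrite -ltnNge; lia.
case: m few => [|m] few; last by rewrite ltn_pmul2l.
by have [c _] := card_gt0P K0; have := few c.
Qed.

Fixpoint ramsey_bound (c n : nat) :=
  if n is n'.+1 then c * ramsey_bound c n' + 1 else 0.

Lemma ramsey_chain (f : A -> A -> K) n s : 0 < #|K| -> uniq s ->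
  ramsey_bound #|K| n <= size s ->
  exists b (g : A -> K), [/\ size b = n, uniq b, {subset b <= s} &
     pairwise (fun x y => f x y == g x) b].
Proof.
move=> K0; elim: n s => [|n IHn] s us le_s.
  by have [c _] := card_gt0P K0; exists [::], (fun _ => c).
case: s us le_s => [|x s] /=; first by rewrite addn1.
move=> /andP [xs us]; rewrite addn1 ltnS => le_s.
have [c le_c] := pigeonhole_count (f x) K0 le_s; rewrite -size_filter in le_c.
have [b [g [sizeb ub bs pb]]] := IHn _ (filter_uniq _ us) le_c.
have xb : x \notin b by apply: contra xs => /bs; rewrite mem_filter => /andP [].
exists (x :: b), (fun z => if z == x then c else g z); split.
- by rewrite /= sizeb.
- by rewrite /= xb ub.
- move=> z /predU1P [->|/bs]; first exact: mem_head.
  by rewrite mem_filter inE => /andP [_ ->]; rewrite orbT.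
- rewrite pairwise_cons eqxx; apply/andP; split.
    by apply/allP => y /bs; rewrite mem_filter => /andP [].
  rewrite (@eq_in_pairwise _ (fun z => z != x) _ (fun x y => f x y == g x)) //.
    by move=> z1 z2 /= /negbTE -> _.
  by apply/allP => z zb; apply: contra xb => /eqP <-.
Qed.

Lemma ramsey (f : A -> A -> K) m s : 0 < #|K| -> uniq s ->
  ramsey_bound #|K| (#|K| * m) <= size s ->
  exists b c, [/\ m <= size b, uniq b, {subset b <= s} &
     pairwise (fun x y => f x y == c) b].
Proof.
move=> K0 us le_s; have [b [g [sizeb ub bs pb]]] := ramsey_chain f K0 us le_s.
have [c le_c] := @pigeonhole_count g b m K0 (eq_leq (esym sizeb)).
exists [seq x <- b | g x == c], c; split.
- by rewrite size_filter.
- exact: filter_uniq.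
- by move=> z; rewrite mem_filter => /andP [_ /bs].
- apply: (@sub_in_pairwise _ (fun x => g x == c) (fun x y => f x y == g x)) => //.
  + by move=> x y /= /eqP <- _.
  + exact: filter_all.
  + exact: pairwise_filter.
Qed.

End Ramsey.

Section Cycles.
Variables (T : finType) (e : rel T) (x0 : T).
Hypotheses (e_sym : symmetric e) (e_irr : irreflexive e).

Definition nbhd (S : {set T}) v := [set w in S | e v w].
Definition mindeg (S : {set T}) d := forall v, v \in S -> d <= #|nbhd S v|.
Definition cycle_in (S : {set T}) C := is_cycle e C /\ {subset C <= S}.
Definition independent (C D : seq T) :=
  all (fun x => all (fun y => (x != y) && ~~ e x y) D) C.

Lemma in_nbhd S v w : (w \in nbhd S v) = (w \in S) && e v w.
Proof. by rewrite inE. Qed.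

Lemma cycle_in_setD (S X : {set T}) C : cycle_in (S :\: X) C -> cycle_in S C.
Proof. by case=> cycC CSX; split=> // w /CSX; rewrite inE => /andP []. Qed.

Lemma mindegW (S : {set T}) d d' : d <= d' -> mindeg S d' -> mindeg S d.
Proof. by move=> le_d degS v /degS; apply: leq_trans. Qed.

Lemma mindeg_card (S : {set T}) v d : v \in S -> mindeg S d -> d < #|S|.
Proof.
move=> vS /(_ v vS) degv; apply: leq_ltn_trans degv _.
rewrite (cardsD1 v S) vS add1n ltnS; apply/subset_leq_card/subsetP => w.
rewrite !inE => /andP [wS evw]; rewrite wS andbT.
by apply: contraTneq evw => ->; rewrite e_irr.
Qed.

Lemma path_rcons_rev x y P : path e x (rcons P y) -> path e y (rcons (rev P) x).
Proof.
have esym2 : e =2 (fun z => e^~ z) by move=> u v; rewrite e_sym.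
by rewrite (eq_path esym2) -rev_path last_rcons belast_rcons rev_cons.
Qed.

Lemma cycle_nth_step C a : is_cycle e C -> a < size C ->
  e (nth x0 C a) (nth x0 C (wrap (size C) a.+1)).
Proof.
case: C => [|x C] //= /andP [_ /andP [cycC _]] lt_a.
have /(pathP x0)/(_ a) := cycC; rewrite size_rcons => /(_ lt_a).
rewrite -rcons_cons !nth_rcons /= lt_a /wrap /=.
case: (ltnP a (size C)) => le_a; first by rewrite ltnS le_a.
have -> : a == size C by lia.
have -> : a.+1 - (size C).+1 = 0 by lia.
by rewrite ltnNge ltnS le_a.
Qed.

Lemma cycle_wrap_step C a : is_cycle e C -> a.+1 < 2 * size C ->
  e (nth x0 C (wrap (size C) a)) (nth x0 C (wrap (size C) a.+1)).
Proof.
move=> cycC lt_a; rewrite -wrapS //.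
by apply: cycle_nth_step => //; apply: wrap_lt; lia.
Qed.

Definition arc C i n := [seq nth x0 C (wrap (size C) m) | m <- iota i n].

Lemma arc_path C i n : is_cycle e C -> i + n < 2 * size C ->
  path e (nth x0 C (wrap (size C) i)) (arc C i.+1 n).
Proof.
move=> cycC; elim: n i => [|n IHn] i lt_in //=.
by rewrite cycle_wrap_step ?IHn //; lia.
Qed.

Lemma arc_last C i n :
  last (nth x0 C (wrap (size C) i)) (arc C i.+1 n) = nth x0 C (wrap (size C) (i + n)).
Proof. by elim: n i => [|n IHn] i /=; rewrite ?addn0 // IHn addnS. Qed.

Lemma arc_cycle C P i j :
  is_cycle e C -> i < size C -> j < size C -> uniq P ->
  (forall p, p \in P -> p \notin C) ->
  path e (nth x0 C j) (rcons P (nth x0 C i)) ->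
  3 <= size P + (cdist (size C) i j).+1 ->
  exists Q, [/\ is_cycle e Q, size Q = size P + (cdist (size C) i j).+1 &
     {subset Q <= [predU C & P]}].
Proof.
move=> cycC lt_i lt_j uP PC pathP size3.
have := cdist_lt lt_i lt_j; have := wrap_cdist lt_i lt_j.
move: size3; set d := cdist _ i j => size3 wrap_d lt_d; clearbody d.
have wrap_in m : i <= m < i + d.+1 -> wrap (size C) m < size C.
  by move=> ?; apply: wrap_lt; lia.
have arcC : {subset arc C i d.+1 <= C}.
  by move=> _ /mapP [m /[!mem_iota] /wrap_in lt_m ->]; exact: mem_nth.
exists (arc C i d.+1 ++ P); split.
- rewrite /is_cycle size_cat size_map size_iota addnC size3 /= /ucycleb.
  apply/andP; split.
    rewrite -/(arc C i.+1 d) /= rcons_cat cat_path arc_path //; last by lia.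
    by rewrite arc_last wrap_d wrap_id.
  rewrite -[_ :: _]/(arc C i d.+1 ++ P) cat_uniq uP andbT; apply/andP; split.
    rewrite map_inj_in_uniq ?iota_uniq // => m1 m2 /[!mem_iota] lt_m1 lt_m2.
    move/eqP; rewrite nth_uniq ?wrap_in //; last by case/andP: cycC => _ /andP [].
    by move/eqP; apply: wrap_inj lt_m1 lt_m2.
  by apply/hasPn => p /PC; apply: contra => /arcC.
- by rewrite size_cat size_map size_iota addnC.
- by move=> v; rewrite mem_cat => /orP [/arcC|]; rewrite !inE => ->; rewrite ?orbT.
Qed.

Lemma mindeg2_cycle (S : {set T}) v : v \in S -> mindeg S 2 ->
  exists C, cycle_in S C.
Proof.
move=> vS deg2.
pose upath n := exists x q,
  [/\ uniq (x :: q), all (mem S) (x :: q), path e x q & size q = n].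
have [_ [x [q [uxq /= /andP [xS qS] pxq <-]]] qmax] :
    exists2 n, upath n & forall m, upath m -> m <= n.
  apply: (@ex_max_nat _ 0 #|T|); first by exists v, [::]; rewrite /= vS.
  move=> _ [x [q [uxq _ _ <-]]]; move/card_uniqP: uxq.
  by move=> /= card_xq; apply: ltnW; rewrite -ltnS -card_xq; apply: max_card.
have nbx_q w : w \in nbhd S x -> w \in q.
  rewrite in_nbhd => /andP [wS exw]; apply: contraT => wq.
  suff /qmax : upath (size (x :: q)) by rewrite /=; lia.
  exists w, (x :: q); split=> //=; last by rewrite e_sym exw pxq.
    rewrite inE negb_or wq andbT -/(uniq (x :: q)) uxq andbT.
    by apply: contraTneq exw => ->; rewrite e_irr.
  by rewrite wS xS qS.
have [y ynb yh] : exists2 y, y \in nbhd S x & y \notin [set head x0 q].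
  apply/subsetPn; apply: contraTN (deg2 x xS) => /subset_leq_card.
  by rewrite cards1 -ltnNge ltnS.
have yq := nbx_q _ ynb; move: ynb; rewrite in_nbhd => /andP [_ exy].
have lt_j : index y q < size q by rewrite index_mem.
have gt0_j : 0 < index y q.
  move: yh; rewrite inE lt0n; apply: contra => /eqP j0.
  by rewrite -[y](nth_index x0 yq) j0 nth0.
have size_take : size (take (index y q).+1 q) = (index y q).+1 by rewrite size_takel.
exists (x :: take (index y q).+1 q); split.
- rewrite /is_cycle /ucycleb /= size_take.
  case/andP: uxq => xq uq; rewrite !ltnS gt0_j take_uniq // andbT.
  rewrite rcons_path take_path //= (last_nth x0) size_take /= nth_take //.
  by rewrite nth_index // e_sym exy; apply: contra xq; apply: mem_take.
- by move=> w; rewrite inE => /predU1P [->|/mem_take wq] //; exact: (allP qS).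
Qed.

Lemma ex_shortest_cycle (S : {set T}) : (exists C, cycle_in S C) ->
  exists2 C, cycle_in S C & forall Q, cycle_in S Q -> size C <= size Q.
Proof.
move=> [C0 C0S].
have [_ [C [CS <-]] Cmin] := @ex_min_nat (fun n => exists C, cycle_in S C /\ size C = n)
  (size C0) (ex_intro _ C0 (conj C0S erefl)).
by exists C => // Q QS; apply: Cmin; exists Q.
Qed.

Lemma mindeg_setD (S X : {set T}) d m : mindeg S (d + m) ->
  (forall w, w \in S :\: X -> #|nbhd S w :&: X| <= m) -> mindeg (S :\: X) d.
Proof.
move=> degS fewX w wSX; have := fewX w wSX; move: wSX; rewrite inE => /andP [wX wS].
have : nbhd S w \subset nbhd (S :\: X) w :|: (nbhd S w :&: X).
  apply/subsetP => z; rewrite !inE => /andP [zS ewz].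
  by rewrite zS ewz !andbT orbC; case: (z \in X).
move/subset_leq_card; have := (leq_card_setU (nbhd (S :\: X) w) (nbhd S w :&: X)).1.
by have := degS w wS; lia.
Qed.

Section ShortestCycle.
Variables (S : {set T}) (C : seq T).
Hypotheses (CS : cycle_in S C) (Cmin : forall Q, cycle_in S Q -> size C <= size Q).

Definition off_cycle (P : seq T) := all [pred p | (p \notin C) && (p \in S)] P.

Lemma shortest_cycle_arc P i j : i < size C -> j < size C -> uniq P ->
  off_cycle P -> path e (nth x0 C j) (rcons P (nth x0 C i)) ->
  3 <= size P + (cdist (size C) i j).+1 ->
  size C <= size P + (cdist (size C) i j).+1.
Proof.
move=> lt_i lt_j uP /allP offP pathP size3.
have [|Q [cycQ <- QCP]] := arc_cycle CS.1 lt_i lt_j uP _ pathP size3.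
  by move=> p /offP /andP [].
by apply: Cmin; split=> // v /QCP /orP [/CS.2|/offP /andP []].
Qed.

Lemma shortest_cycle_chordless m : m < size C ->
  e (nth x0 C 0) (nth x0 C m) -> (m == 1) || (m == (size C).-1).
Proof.
move=> lt_m e0m; have gt0C : 0 < size C by lia.
have m0 : m != 0 by apply: contraTneq e0m => ->; rewrite e_irr.
have := @shortest_cycle_arc [::] 0 m gt0C lt_m erefl erefl.
by rewrite /= cdist0n e_sym e0m => /(_ erefl); lia.
Qed.

(* Closing [P] with the shorter of the two arcs of [C] between [i] and [j]
   gives a cycle of length at most [|P| + 1 + |C|/2]. *)
Lemma shortest_cycle_ear P i j : i < size C -> j < size C -> uniq P ->
  off_cycle P -> path e (nth x0 C j) (rcons P (nth x0 C i)) ->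
  0 < size P -> (i != j) || (1 < size P) -> size C <= 2 * size P + 2.
Proof.
move=> lt_i lt_j uP offP pathP gt0P.
case: (eqVneq i j) lt_j pathP => [<- /= _ pathP gt1P|ij lt_j pathP _].
  have := shortest_cycle_arc lt_i lt_i uP offP pathP.
  (* [set] unifies the occurrences of [size P], whose implicit (convertible)
     type arguments differ and would be distinct atoms for [lia]. *)
  by rewrite cdistnn addn1 => /(_ gt1P); set p := size P; lia.
have := cdist_add_sym lt_i lt_j ij; have := cdist_gt0 lt_i lt_j ij.
rewrite eq_sym in ij; have := cdist_gt0 lt_j lt_i ij.
have := shortest_cycle_arc lt_i lt_j uP offP pathP.
have := @shortest_cycle_arc (rev P) j i lt_j lt_i.
rewrite rev_uniq uP size_rev (path_rcons_rev pathP) /off_cycle all_rev.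
rewrite -/(off_cycle P) offP.
by move=> /(_ erefl erefl erefl); set p := size P; lia.
Qed.

Hypothesis girth9 : 9 <= size C.

Lemma shortest_cycle_no_short_ear P i j : i < size C -> j < size C ->
  uniq P -> off_cycle P -> path e (nth x0 C j) (rcons P (nth x0 C i)) ->
  0 < size P <= 3 -> (i != j) || (1 < size P) -> False.
Proof.
move=> lt_i lt_j uP offP pathP /andP [gt0P le3P] ijP.
by have := shortest_cycle_ear lt_i lt_j uP offP pathP gt0P ijP; lia.
Qed.

Definition cnbhd := [set v | (v \in C) || has (e v) C].

Lemma shortest_cycle_exit : mindeg S 3 ->
  exists2 x, x \in nbhd S (nth x0 C 0) & x \notin C.
Proof.
move=> deg3; have gt0C : 0 < size C by lia.
have c0S : nth x0 C 0 \in S by apply/CS.2/mem_nth.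
apply/exists_inP; apply: contraTT (deg3 _ c0S); rewrite negb_exists_in => /forall_inP inC.
suff /subset_leq_card :
    nbhd S (nth x0 C 0) \subset [set nth x0 C 1; nth x0 C (size C).-1].
  by rewrite cards2 -ltnNge => /leq_ltn_trans; apply; case: (_ != _).
apply/subsetP => w wnb; have := inC w wnb; rewrite negbK => wC.
move: wnb; rewrite in_nbhd => /andP [_].
rewrite -(nth_index x0 wC) !inE => /shortest_cycle_chordless.
by rewrite index_mem wC => /(_ isT) /orP [] /eqP ->; rewrite eqxx ?orbT.
Qed.

Lemma shortest_cycle_nbr_uniq v i j : v \in S -> v \notin C ->
  i < size C -> j < size C -> e v (nth x0 C i) -> e v (nth x0 C j) -> i = j.
Proof.
move=> vS vC lt_i lt_j evi evj; case: (eqVneq i j) => // ij; exfalso.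
apply: (@shortest_cycle_no_short_ear [:: v] i j) => //=; rewrite ?ij //.
  by rewrite vC vS.
by rewrite e_sym evj evi.
Qed.

Lemma setD_cnbhd_nonempty : mindeg S 3 -> exists y, y \in S :\: cnbhd.
Proof.
move=> deg3; have gt0C : 0 < size C by lia.
have [x] := shortest_cycle_exit deg3; rewrite in_nbhd => /andP [xS e0x] xC.
have [y ynb] : exists2 y, y \in nbhd S x & y \notin [set nth x0 C 0].
  apply/subsetPn; apply: contraTN (deg3 x xS) => /subset_leq_card.
  by rewrite cards1; lia.
rewrite in_nbhd in ynb; case/andP: ynb => yS exy; rewrite inE => y_c0.
have yC : y \notin C.
  apply: contra y_c0 => yC; rewrite -(nth_index x0 yC).
  rewrite (@shortest_cycle_nbr_uniq x (index y C) 0) ?index_mem ?nth_index //.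
  by rewrite e_sym.
exists y; rewrite !inE negb_or yC yS andbT /=; apply/(has_nthP x0) => -[j lt_j eyj].
apply: (@shortest_cycle_no_short_ear [:: y; x] 0 j) => //=.
- by rewrite inE andbT eq_sym; apply: contraTneq exy => ->; rewrite e_irr.
- by rewrite xC xS yC yS.
- by rewrite e_sym eyj e_sym exy e_sym e0x.
- by rewrite orbT.
Qed.

Lemma mindeg_setD_cnbhd k : mindeg S (k + 1) -> mindeg (S :\: cnbhd) k.
Proof.
move=> degS; apply: mindeg_setD degS _ => w.
rewrite !inE negb_or => /andP [/andP [wC /hasPn wnC] wS].
have offC z : e w z -> z \notin C by apply: contraTN => /wnC.
have neq_w z : e w z -> w != z by apply: contraTneq => <-; rewrite e_irr.
have nbC z : z \in nbhd S w :&: cnbhd ->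
    [/\ z \in S, e w z & exists2 i, i < size C & e z (nth x0 C i)].
  rewrite !inE => /andP [/andP [zS ewz]].
  by rewrite (negbTE (offC _ ewz)) => /(has_nthP x0).
apply/card_le1_eqP => u v /nbC [uS ewu [i lt_i eui]] /nbC [vS ewv [j lt_j evj]].
case: (eqVneq u v) => // uv; exfalso.
apply: (@shortest_cycle_no_short_ear [:: v; w; u] i j) => //=.
- by rewrite !inE !negb_or (eq_sym v u) uv (eq_sym v w) !neq_w.
- by rewrite wC wS uS vS !offC.
- by rewrite e_sym evj e_sym ewv ewu eui.
- by rewrite orbT.
Qed.

Lemma independent_setD_cnbhd D : {subset D <= S :\: cnbhd} -> independent C D.
Proof.
move=> DS; apply/allP => u uC; apply/allP => v /DS; rewrite !inE negb_or.
case/andP=> /andP [vC /hasPn vC'] _; apply/andP; split.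
  by apply: contraNneq vC => <-.
by rewrite e_sym; apply: vC'.
Qed.

End ShortestCycle.

Lemma independentC C D : independent C D -> independent D C.
Proof.
move=> /allP CD; apply/allP => y yD; apply/allP => x xC.
by have /allP/(_ y yD) := CD x xC; rewrite eq_sym e_sym.
Qed.

Lemma girth9_independent_cycles k (S : {set T}) : (exists v, v \in S) ->
  mindeg S (k + 2) -> (forall C, cycle_in S C -> 9 <= size C) ->
  exists L, [/\ size L = k, {in L, forall C, cycle_in S C} & pairwise independent L].
Proof.
elim: k S => [|k IHk] S [v vS] degS girthS; first by exists [::].
have deg2 : mindeg S 2 by apply: mindegW degS; lia.
have deg3 : mindeg S 3 by apply: mindegW degS; lia.
have [C CS Cmin] := ex_shortest_cycle (mindeg2_cycle vS deg2).
have girthC := girthS C CS.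
have [y yS'] := setD_cnbhd_nonempty CS Cmin girthC deg3.
have degS' : mindeg (S :\: cnbhd C) (k + 2).
  by apply: (mindeg_setD_cnbhd CS Cmin girthC (k := k + 2)); apply: mindegW degS; lia.
have [|L [sizeL LS' indepL]] := IHk (S :\: cnbhd C) (ex_intro _ y yS') degS'.
  by move=> D /cycle_in_setD/girthS.
exists (C :: L); split=> /=; first by rewrite sizeL.
  by move=> D /predU1P [->|/LS'/cycle_in_setD].
rewrite indepL andbT; apply/allP => D /LS' [_ DS'].
exact: (independent_setD_cnbhd DS').
Qed.

Lemma pairwise_independent_cycles k (L : seq (seq T)) : k <= size L ->
  {in L, forall C, is_cycle e C} -> pairwise independent L -> has_k_indep_cycles e k.
Proof.
move=> le_k cycL /(pairwiseP [::]) indepL.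
have ltL (i : 'I_k) : i < size L by apply: leq_trans le_k.
exists (fun i => nth [::] L i); split=> [i|i j ij x y xi yj].
  exact/cycL/mem_nth.
have indep_ij (i' j' : 'I_k) : i' < j' -> independent (nth [::] L i') (nth [::] L j').
  by move=> lt_ij; apply: indepL; rewrite ?inE.
have [/indep_ij|/indep_ij/independentC|/val_inj eq_ij] := ltngtP i j.
- by move/allP/(_ x xi)/allP/(_ y yj).
- by move/allP/(_ x xi)/allP/(_ y yj).
- by rewrite eq_ij eqxx in ij.
Qed.

Lemma mindeg_setD_card (S X : {set T}) v d : v \in S -> mindeg S (d + #|X|) ->
  mindeg (S :\: X) d /\ exists u, u \in S :\: X.
Proof.
move=> vS degS; split.
  by apply: mindeg_setD degS _ => w _; apply/subset_leq_card/subsetIr.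
apply/card_gt0P; rewrite cardsD.
have := mindeg_card vS degS; have : #|S :&: X| <= #|X| by apply/subset_leq_card/subsetIr.
lia.
Qed.

Definition short_packing (S : {set T}) (L : seq (seq T)) :=
  [/\ uniq L, {in L, forall C, cycle_in S C /\ size C <= 8} &
      {in L &, forall C D : seq T, C != D -> [disjoint C & D]}].

Lemma short_packing_card (S : {set T}) L :
  short_packing S L -> #|[set x in flatten L]| <= 8 * size L.
Proof.
case=> _ shortL _; rewrite cardsE (leq_trans (card_size _)) // size_flatten.
elim: L shortL => //= C L IHL shortCL; rewrite mulnS leq_add //.
  by have [] := shortCL C (mem_head _ _).
by apply: IHL => D DL; apply: shortCL; rewrite inE DL orbT.
Qed.

Lemma short_packing_cons (S : {set T}) L C : short_packing S L ->
  cycle_in (S :\: [set x in flatten L]) C -> size C <= 8 ->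
  short_packing S (C :: L).
Proof.
case=> uL shortL disjL CU le8C.
have CS := cycle_in_setD CU.
have disjC D : D \in L -> [disjoint C & D].
  move=> DL; rewrite disjoint_has; apply/hasPn => w /CU.2; rewrite !inE.
  by case/andP=> wL _; apply: contra wL => wD; apply/flattenP; exists D.
have C0 : C != [::] by case: CS => /andP [size3C _] _; apply: contraTneq size3C => ->.
split=> [|D /predU1P [->|/shortL] //|D1 D2].
- rewrite /= uL andbT; apply: contra C0 => /disjC /disjointFr C_C.
  by move: C_C; case: (C) => // w C' /(_ w (mem_head _ _)); rewrite mem_head.
- move=> /predU1P [->|D1L] /predU1P [->|D2L]; rewrite ?eqxx //.
  + by move=> _; apply: disjC.
  + by move=> _; rewrite disjoint_sym; apply: disjC.
  + exact: disjL.
Qed.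

Lemma short_packing_step r k (S : {set T}) v L : v \in S ->
  mindeg S (8 * r + k + 2) -> size L <= r -> short_packing S L ->
  has_k_indep_cycles e k \/ exists C, short_packing S (C :: L).
Proof.
move=> vS degS le_Lr packL; set X := [set x in flatten L].
have [degU [u uU]] : mindeg (S :\: X) (k + 2) /\ exists u, u \in S :\: X.
  apply: mindeg_setD_card vS _; apply: mindegW degS.
  by have := short_packing_card packL; rewrite -/X; lia.
case: (classic (exists C, cycle_in (S :\: X) C /\ size C <= 8)).
  by move=> [C [CU le8C]]; right; exists C; apply: short_packing_cons.
move=> noshort; left; have girthU C : cycle_in (S :\: X) C -> 9 <= size C.
  by move=> CU; rewrite ltnNge; apply/negP => le8C; apply: noshort; exists C.
have [L' [<- L'U indepL']] :=
  girth9_independent_cycles (ex_intro _ u uU) degU girthU.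
by apply: pairwise_independent_cycles indepL' => // C /L'U [].
Qed.

Lemma short_packing_or_independent r k (S : {set T}) v : v \in S ->
  mindeg S (8 * r + k + 2) ->
  has_k_indep_cycles e k \/ exists L, size L = r /\ short_packing S L.
Proof.
move=> vS degS; suff packing : forall n, n <= r ->
    has_k_indep_cycles e k \/ exists L, size L = n /\ short_packing S L.
  exact: packing.
elim=> [|n IHn] lt_nr; first by right; exists [::]; split.
have [|[L [sizeL packL]]] := IHn (ltnW lt_nr); first by left.
have le_Lr : size L <= r by rewrite sizeL ltnW.
have [|[C packCL]] := short_packing_step vS degS le_Lr packL; first by left.
by right; exists (C :: L); rewrite /= sizeL.
Qed.

Lemma disjoint_family_eq (L : seq (seq T)) C D x :
  {in L &, forall C D : seq T, C != D -> [disjoint C & D]} ->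
  C \in L -> D \in L -> x \in C -> x \in D -> C = D.
Proof.
move=> disjL CL DL xC xD; apply/eqP; apply: contraT => /(disjL _ _ CL DL).
by move/disjointFr/(_ xC); rewrite xD.
Qed.

Definition colour : finType := option ('I_8 * 'I_8).

Definition edge_colour (C D : seq T) : colour :=
  [pick pq : 'I_8 * 'I_8 | [&& pq.1 < size C, pq.2 < size D &
                              e (nth x0 C pq.1) (nth x0 D pq.2)]].

Lemma edge_colourP C D p q : edge_colour C D = Some (p, q) ->
  [/\ p < size C, q < size D & e (nth x0 C p) (nth x0 D q)].
Proof. by rewrite /edge_colour; case: pickP => // -[p' q'] /and3P [? ? ?] [<- <-]. Qed.

Lemma edge_colour_None C D : size C <= 8 -> size D <= 8 -> [disjoint C & D] ->
  edge_colour C D = None -> independent C D.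
Proof.
rewrite /edge_colour => le8C le8D disjCD; case: pickP => // noedge _.
apply/allP => _ /(nthP x0) [a lt_a <-]; apply/allP => _ /(nthP x0) [c lt_c <-].
apply/andP; split.
  by apply: contraFneq (disjointFr disjCD (mem_nth x0 lt_a)) => ->; apply: mem_nth.
have := noedge (Ordinal (leq_trans lt_a le8C), Ordinal (leq_trans lt_c le8D)).
by rewrite /= lt_a lt_c /= => /negbT.
Qed.

Lemma card_nth_family (L Ls : seq (seq T)) i :
  {in L &, forall C D : seq T, C != D -> [disjoint C & D]} -> uniq Ls ->
  {subset Ls <= L} -> {in Ls, forall C, i < size C} ->
  #|[set:: [seq nth x0 C i | C <- Ls]]| = size Ls.
Proof.
move=> disjL uLs LsL lt_i; rewrite cardsE -(size_map (fun C => nth x0 C i)).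
apply/card_uniqP.
rewrite map_inj_in_uniq // => C D CLs DLs eqCD.
apply: (disjoint_family_eq disjL (LsL _ CLs) (LsL _ DLs) (mem_nth x0 (lt_i _ CLs))).
by rewrite eqCD mem_nth ?lt_i.
Qed.

Lemma edge_colour_biclique t (L : seq (seq T)) p q : 0 < t -> uniq L ->
  {in L &, forall C D : seq T, C != D -> [disjoint C & D]} -> 2 * t <= size L ->
  pairwise (fun C D => edge_colour C D == Some (p, q)) L -> has_Ktt_subgraph e t.
Proof.
move=> t0 uL disjL le_L colL; set LA := take t L; set LB := take t (drop t L).
have sizeA : size LA = t by rewrite size_takel //; lia.
have sizeB : size LB = t by rewrite size_takel // size_drop; lia.
have LAL : {subset LA <= L} by move=> C /mem_take.
have LBL : {subset LB <= L} by move=> C /mem_take/mem_drop.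
have [C0 C0A] : exists C, C \in LA by exists (nth [::] LA 0); rewrite mem_nth ?sizeA.
have [D0 D0B] : exists D, D \in LB by exists (nth [::] LB 0); rewrite mem_nth ?sizeB.
move: uL colL; rewrite -(cat_take_drop t L) pairwise_cat cat_uniq.
case/and3P=> uA /hasPn LAB uB /andP [/allrelP colAB _].
have {}colAB C D : C \in LA -> D \in LB -> edge_colour C D = Some (p, q).
  by move=> CA /mem_take DB; apply/eqP/colAB.
have ltA C : C \in LA -> p < size C.
  by move=> CA; have [] := edge_colourP (colAB C D0 CA D0B).
have ltB D : D \in LB -> q < size D.
  by move=> DB; have [] := edge_colourP (colAB C0 D C0A DB).
exists [set:: [seq nth x0 C p | C <- LA]], [set:: [seq nth x0 D q | D <- LB]]; split.
- by rewrite (card_nth_family disjL uA LAL ltA).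
- by rewrite (card_nth_family disjL (take_uniq _ uB) LBL ltB).
- apply/pred0P => x /=; rewrite !inE.
  apply/andP => -[/mapP [C CA ->] /mapP [D DB eq_pq]].
  have eqCD : C = D.
    apply: (disjoint_family_eq disjL (LAL _ CA) (LBL _ DB) (mem_nth x0 (ltA _ CA))).
    by rewrite eq_pq mem_nth ?ltB.
  by have := LAB D (mem_take DB); rewrite -eqCD CA.
- move=> _ _ /[!inE] /mapP [C CA ->] /mapP [D DB ->].
  by have [] := edge_colourP (colAB C D CA DB).
Qed.

Lemma short_packing_ramsey t k (S : {set T}) L : 0 < t -> short_packing S L ->
  size L = ramsey_bound #|colour| (#|colour| * (k + 2 * t)) ->
  has_k_indep_cycles e k \/ has_Ktt_subgraph e t.
Proof.
move=> t0 [uL shortL disjL] sizeL.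
have colour0 : 0 < #|colour| by apply/card_gt0P; exists None.
have [b [c [le_b ub bL colb]]] :=
  ramsey edge_colour colour0 uL (eq_leq (esym sizeL)).
have disjb : {in b &, forall C D : seq T, C != D -> [disjoint C & D]}.
  by move=> C D /bL CL /bL DL; apply: disjL.
case: c colb => [[p q]|] colb.
  have le2t_b := leq_trans (leq_addl k _) le_b.
  by right; apply: (edge_colour_biclique t0 ub disjb le2t_b) colb.
left; apply: (@pairwise_independent_cycles _ b).
  exact: leq_trans (leq_addr _ _) le_b.
  by move=> C /bL /shortL [[]].
have short8 C : C \in b -> size C <= 8 by move=> /bL /shortL [].
apply/(pairwiseP [::]) => i j /[!inE] lt_i lt_j lt_ij.
have /eqP noedge := (pairwiseP [::] colb) i j lt_i lt_j lt_ij.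
have neq_ij : nth [::] b i != nth [::] b j by rewrite nth_uniq // neq_ltn lt_ij.
have [Cb Db] := (mem_nth [::] lt_i, mem_nth [::] lt_j).
exact: edge_colour_None (short8 _ Cb) (short8 _ Db) (disjb _ _ Cb Db neq_ij) noedge.
Qed.

End Cycles.

Section Degenerate.
Variables (T : finType) (e : rel T).
Hypotheses (e_sym : symmetric e) (e_irr : irreflexive e).

Definition degenerate d :=
  forall S : {set T}, S != set0 -> exists2 v, v \in S & #|nbhd e S v| <= d.

Lemma degenerateW d d' : d <= d' -> degenerate d -> degenerate d'.
Proof.
by move=> le_d degG S /degG [v vS le_v]; exists v => //; apply: leq_trans le_d.
Qed.

Variables (d : nat) (degG : degenerate d).

Lemma degenerate_colorable_in (S : {set T}) :
  exists f : T -> 'I_d.+1, {in S &, forall x y, e x y -> f x != f y}.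
Proof.
elim: {S}#|S| {-2}S (leqnn #|S|) => [|n IHn] S le_S.
  move: le_S; rewrite leqn0 => /eqP/cards0_eq ->.
  by exists (fun _ => ord0) => x; rewrite inE.
have [->|/degG [v vS le_v]] := eqVneq S set0.
  by exists (fun _ => ord0) => x y; rewrite inE.
have [|f fP] := IHn (S :\ v); first by move: le_S; rewrite (cardsD1 v S) vS; lia.
have [c cF] : exists c, c \notin f @: nbhd e S v.
  apply/existsP; rewrite -negb_forall; apply: contraTN le_v => /forallP allF.
  rewrite -ltnNge; apply: leq_trans _ (leq_imset_card f _).
  have /subset_leq_card : [set: 'I_d.+1] \subset f @: nbhd e S v.
    by apply/subsetP => c _; apply: allF.
  by rewrite cardsT card_ord.
have nbF z : z \in S -> e v z -> f z \in f @: nbhd e S v.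
  by move=> zS evz; apply: imset_f; rewrite in_nbhd zS evz.
exists (fun x => if x == v then c else f x) => x y xS yS exy.
case: (eqVneq x v) => [exv|xv]; case: (eqVneq y v) => [eyv|yv].
- by move: exy; rewrite exv eyv e_irr.
- by apply: contra cF => /eqP ->; apply: nbF; rewrite // -exv.
- by rewrite eq_sym; apply: contra cF => /eqP ->; apply: nbF; rewrite // -eyv e_sym.
- by apply: fP; rewrite // !inE ?xv ?yv.
Qed.

Lemma degenerate_colorable : colorable e d.+1.
Proof.
have [f fP] := degenerate_colorable_in [set: T].
by exists f => x y; apply: fP; rewrite inE.
Qed.

(* Removing a vertex of degree at most [d] deletes at most [2 d] from the
   degree sum. *)
Lemma degenerate_sum_degree (S : {set T}) :
  \sum_(u in S) #|nbhd e S u| <= 2 * d * #|S|.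
Proof.
elim: {S}#|S| {-2}S (leqnn #|S|) => [|n IHn] S le_S.
  by move: le_S; rewrite leqn0 => /eqP/cards0_eq ->; rewrite big_set0.
have [->|/degG [v vS le_v]] := eqVneq S set0; first by rewrite big_set0.
have cardS : #|S| = #|S :\ v| + 1 by rewrite (cardsD1 v S) vS addnC.
have nbD u : u \in S :\ v -> #|nbhd e S u| = (u \in nbhd e S v) + #|nbhd e (S :\ v) u|.
  move=> uSv; rewrite (cardsD1 v (nbhd e S u)); congr (_ + _).
    by move: uSv; rewrite !in_nbhd !inE vS e_sym => /andP [_ ->].
  by apply: eq_card => w; rewrite !inE andbA.
rewrite (big_setD1 _ vS) /= (eq_bigr _ nbD) big_split /=.
have le_v' : \sum_(u in S :\ v) (u \in nbhd e S v) <= #|nbhd e S v|.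
  rewrite -sum1_card [X in _ <= X]big_mkcond [X in X <= _]big_mkcond /=.
  by apply: leq_sum => u _; case: (u \in S :\ v); case: (u \in nbhd e S v).
have := IHn (S :\ v); move: le_S; rewrite cardS addn1 ltnS => le_S /(_ le_S).
lia.
Qed.

Lemma degenerate_avg_degree : 0 < #|T| -> (avg_degree e <= (2 * d)%:R)%R.
Proof.
move=> T0; rewrite /avg_degree ler_pdivrMr ?ltr0n // -natrM ler_nat.
have := degenerate_sum_degree [set: T]; rewrite cardsT.
congr (_ <= _); apply: eq_big => [v|v _]; first by rewrite inE.
by apply: eq_card => w; rewrite !inE.
Qed.

End Degenerate.

Definition degeneracy_bound t k :=
  8 * ramsey_bound #|colour| (#|colour| * (k + 2 * t)) + k + 2.

Lemma Ok_free_Ktt_free_degenerate (T : finType) (e : rel T) t k :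
  symmetric e -> irreflexive e -> 0 < t ->
  Ok_free e k -> ~ has_Ktt_subgraph e t -> degenerate e (degeneracy_bound t k).
Proof.
move=> e_sym e_irr t0 Okfree Kttfree S /set0Pn [v vS].
case: (classic (exists2 u, u \in S & #|nbhd e S u| <= degeneracy_bound t k)).
  by [].
move=> highdeg.
have degS : mindeg e S (degeneracy_bound t k).
  move=> u uS; rewrite leqNgt; apply/negP => lt_u.
  by apply: highdeg; exists u => //; apply: ltnW.
have [//|[L [sizeL packL]]] := short_packing_or_independent v e_sym e_irr vS degS.
by case: (short_packing_ramsey v e_sym t0 packL sizeL).
Qed.

Local Open Scope ring_scope.

Theorem mainTheorem10 :
  exists h : nat -> nat -> nat,
    forall (t k : nat), (1 <= t)%N -> (1 <= k)%N ->
    forall (T : finType) (e : rel T),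
      (0 < #|T|)%N -> simple_graph e ->
      Ok_free e k -> ~ has_Ktt_subgraph e t ->
      avg_degree e <= (h t k)%:R /\ colorable e (h t k).+1.
Proof.
exists (fun t k => 2 * degeneracy_bound t k)%N.
move=> t k t0 _ T e T0 [e_sym e_irr] Okfree Kttfree.
have degG := Ok_free_Ktt_free_degenerate e_sym e_irr t0 Okfree Kttfree.
split; first exact: degenerate_avg_degree.
have degG2 := degenerateW (leq_pmull _ (isT : (0 < 2)%N)) degG.
exact: degenerate_colorable e_sym e_irr _ degG2.
Qed.
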